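(* Let $m\ge 2$ and let $A=(a_{ij})$, $B=(b_{ij})$ be real $m\times m$ matrices with $0\le a_{ij},b_{ij}\le 1$ for all $i,j$, $\det(A)=\det(B)=0$, $AB^T=\mathbf{1}$ (the $m\times m$ all-ones matrix), and such that neither $A$ nor $B$ has all of its rows identical. Let $V:S^{m-1}\to S^{m-1}$ be given by $(V(x))_k=\big(\sum_{i=1}^m a_{ik}x_i\big)\big(\sum_{j=1}^m b_{jk}x_j\big)$, $k=1,\dots,m$. Let $C=(c_{ij})$ be a real $m\times m$ matrix with $c_{ij}\ge 0$ for all $i,j$, and for $k=1,\dots,m$ let $c^{(k)}=(c_{1k},c_{2k},\dots,c_{mk})^T$; suppose that for every $k=1,\dots,m$ either $Ac^{(k)}\le c^{(k)}$ or $Bc^{(k)}\le c^{(k)}$ (componentwise). Then for any $p_1,\dots,p_m\in\mathbb{R}^+$ the function $$\phi(x)=\prod_{k=1}^m\Big(\sum_{i=1}^m c_{ik}x_i\Big)^{p_k}$$ is a Lyapunov function for $V$, i.e. $\lim_{n\to\infty}\phi(x^{(n)})$ exists for every $x^{(0)}\in S^{m-1}$, where $x^{(n+1)}=V(x^{(n)})$.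
   Context: $S^{m-1}=\{x\in\mathbb{R}^m: x_i\ge 0,\ \sum_i x_i=1\}$. A continuous function $\phi:S^{m-1}\to\mathbb{R}$ is a Lyapunov function for $V$ if $\lim_{n\to\infty}\phi(x^{(n)})$ exists for every initial point $x^{(0)}\in S^{m-1}$ with $x^{(n+1)}=V(x^{(n)})$. *)

From HB Require Import structures.
From mathcomp Require Import all_boot all_order all_algebra.
From mathcomp Require Import all_classical all_reals all_analysis.
Set Implicit Arguments. Unset Strict Implicit. Unset Printing Implicit Defensive.
Import Order.TTheory GRing.Theory Num.Theory.
Import numFieldNormedType.Exports.
Local Open Scope ring_scope.
Local Open Scope classical_set_scope.

(* Points of R^m are row vectors 'rV[R]_m; the i-th coordinate is x 0 i. *)

Definition simplex {R : realType} (m : nat) : set 'rV[R]_m :=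
  [set x | (forall i, 0 <= x 0 i) /\ \sum_(i < m) x 0 i = 1].

Definition Vop {R : realType} (m : nat) (A B : 'M[R]_m) (x : 'rV[R]_m)
  : 'rV[R]_m :=
  \row_(k < m) ((\sum_(i < m) A i k * x 0 i) * (\sum_(j < m) B j k * x 0 j)).

Definition phiC {R : realType} (m : nat) (C : 'M[R]_m) (p : 'I_m -> R)
  (x : 'rV[R]_m) : R :=
  \prod_(k < m) ((\sum_(i < m) C i k * x 0 i) `^ (p k)).

Definition is_lyapunov {R : realType} (m : nat)
  (V : 'rV[R]_m -> 'rV[R]_m) (phi : 'rV[R]_m -> R) : Prop :=
  {within (@simplex R m), continuous phi} /\
  forall x0 : 'rV[R]_m, x0 \in @simplex R m ->
    cvgn (fun n : nat => phi (iter n V x0)).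

Definition rows_identical {R : realType} (m : nat) (M : 'M[R]_m) : Prop :=
  forall i j l : 'I_m, M i l = M j l.

Definition col_sub {R : realType} (m : nat) (M C : 'M[R]_m) (k : 'I_m) : Prop :=
  forall i : 'I_m, \sum_(j < m) M i j * C j k <= C i k.

From HB Require Import structures.
From mathcomp Require Import all_boot all_order all_algebra.
From mathcomp Require Import all_classical all_reals all_analysis.
From mathcomp Require Import ring.
Import Order.TTheory GRing.Theory Num.Theory.
Import numFieldNormedType.Exports.
Local Open Scope ring_scope.
Local Open Scope classical_set_scope.

(* V maps the simplex to itself, because A B^T = 1 makes the coordinates of
   V x sum to (sum_i x_i)^2.  On the simplex every (A x)_k lies in [0, 1], so
   (V x)_k <= (B x)_k, and sum_i c_ik (B x)_i = sum_j x_j (B c^(k))_j <= sum_j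
   c_jk x_j whenever B c^(k) <= c^(k) (symmetrically with A).  Hence every
   factor of phi decreases along an orbit, phi (x^(n)) is a nonincreasing
   sequence of nonnegative reals, and it converges. *)

Section ContinuousBig.
Variables (R : realType) (T : topologicalType) (I : Type).

Lemma continuous_sum (s : seq I) (F : I -> T -> R) :
  (forall i, continuous (F i)) -> continuous (fun x => \sum_(i <- s) F i x).
Proof.
move=> F_cont; elim: s => [|a s IHs].
  by under eq_fun do rewrite big_nil; exact: cst_continuous.
under eq_fun do rewrite big_cons.
by move=> x; apply: continuousD; [exact: F_cont | exact: IHs].
Qed.

Lemma continuous_prod (s : seq I) (F : I -> T -> R) :
  (forall i, continuous (F i)) -> continuous (fun x => \prod_(i <- s) F i x).
Proof.
move=> F_cont; elim: s => [|a s IHs].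
  by under eq_fun do rewrite big_nil; exact: cst_continuous.
under eq_fun do rewrite big_cons.
by move=> x; apply: continuousM; [exact: F_cont | exact: IHs].
Qed.

End ContinuousBig.

(* [powR] is not continuous at 0 from the left (0 `^ p = 0 but it equals 1
   on negatives), so we clamp its argument at 0. *)
Lemma continuous_powR_max0 (R : realType) (p : R) :
  0 < p -> continuous (fun y : R => Num.max y 0 `^ p).
Proof.
move=> p_gt0 y.
have npos_powR0 z : z <= 0 -> Num.max z 0 `^ p = 0.
  by move=> z_le0; rewrite max_r // powR0 // gt_eqF.
have [y_lt0|y_gt0|->] := ltgtP y 0.
- rewrite /continuous_at npos_powR0 ?ltW //.
  apply: cvg_trans (@cvg_cst _ (0 : R) _ (nbhs y) _).
  apply: near_eq_cvg; near=> z.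
  by rewrite npos_powR0 // ltW //; near: z; exact: lt_nbhsl.
- have powR_cont : {for y, continuous (fun a : R => a `^ p)}.
    apply: differentiable_continuous; apply/derivable1_diffP.
    by apply: derivable_powR; rewrite in_itv /= andbT.
  rewrite /continuous_at max_l ?ltW //; apply: cvg_trans powR_cont.
  apply: near_eq_cvg; near=> z.
  by rewrite /= max_l // ltW //; near: z; exact: lt_nbhsr.
- apply/left_right_continuousP; rewrite npos_powR0 //; split.
  + apply: cvg_trans (@cvg_cst _ (0 : R) _ (0 : R)^'- _).
    apply: near_eq_cvg; near=> z.
    by rewrite npos_powR0 // ltW //; near: z; exact: nbhs_left_lt.
  + apply: cvg_trans (powR_cvg0 p_gt0).
    apply: near_eq_cvg; near=> z.
    by rewrite /= max_l // ltW //; near: z; exact: nbhs_right_gt.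
Unshelve. all: end_near. Qed.

Section QuadraticOperator.
Variables (R : realType) (m : nat).
Implicit Types (M A B C : 'M[R]_m) (x : 'rV[R]_m).

Lemma simplex_ge0 x i : x \in @simplex R m -> 0 <= x 0 i.
Proof. by rewrite inE => -[x_ge0 _]. Qed.

Lemma simplex_sum {x} : x \in @simplex R m -> \sum_(i < m) x 0 i = 1.
Proof. by rewrite inE => -[_ x_sum1]. Qed.

Lemma lin_form_ge0 M x k : (forall i j, 0 <= M i j) -> x \in @simplex R m ->
  0 <= \sum_(i < m) M i k * x 0 i.
Proof.
by move=> M_ge0 x_simplex; apply: sumr_ge0 => i _; rewrite mulr_ge0 ?simplex_ge0.
Qed.

Lemma lin_form_le1 M x k : (forall i j, 0 <= M i j <= 1) -> x \in @simplex R m ->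
  \sum_(i < m) M i k * x 0 i <= 1.
Proof.
move=> M01 x_simplex; rewrite -(simplex_sum x_simplex); apply: ler_sum => i _.
by apply: ler_piMl; [exact: simplex_ge0 | case/andP: (M01 i k)].
Qed.

Lemma Vop_sym A B : Vop A B = Vop B A.
Proof. by apply/funext => x; apply/rowP => k; rewrite !mxE mulrC. Qed.

Lemma Vop_simplex A B x :
  (forall i j, 0 <= A i j) -> (forall i j, 0 <= B i j) ->
  A *m B^T = const_mx 1 -> x \in @simplex R m -> Vop A B x \in @simplex R m.
Proof.
move=> A_ge0 B_ge0 AB1 x_simplex; rewrite inE; split.
  by move=> k; rewrite mxE mulr_ge0 ?lin_form_ge0.
have rowsAB1 i j : \sum_(k < m) A i k * B j k = 1.
  move/matrixP: AB1 => /(_ i j); rewrite !mxE => <-.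
  by apply: eq_bigr => k _; rewrite mxE.
transitivity (\sum_(i < m) \sum_(j < m) x 0 i * x 0 j).
  under eq_bigr do rewrite mxE big_distrl /=.
  rewrite exchange_big; apply: eq_bigr => i _.
  under eq_bigr do rewrite big_distrr /=.
  rewrite exchange_big; apply: eq_bigr => j _.
  rewrite -[RHS]mulr1 -(rowsAB1 i j) mulr_sumr; apply: eq_bigr => k _.
  by ring.
under eq_bigr do rewrite -mulr_sumr (simplex_sum x_simplex) mulr1.
exact: simplex_sum.
Qed.

Lemma lin_form_Vop_le A B C x k :
  (forall i j, 0 <= A i j <= 1) -> (forall i j, 0 <= B i j) ->
  (forall i j, 0 <= C i j) -> col_sub B C k -> x \in @simplex R m ->
  \sum_(i < m) C i k * Vop A B x 0 i <= \sum_(i < m) C i k * x 0 i.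
Proof.
move=> A01 B_ge0 C_ge0 BC_le x_simplex.
apply: (@le_trans _ _ (\sum_(i < m) C i k * \sum_(j < m) B j i * x 0 j)).
  apply: ler_sum => i _; rewrite mxE ler_wpM2l //.
  by apply: ler_piMl; [exact: lin_form_ge0 | exact: lin_form_le1].
have -> : \sum_(i < m) C i k * \sum_(j < m) B j i * x 0 j
        = \sum_(j < m) x 0 j * \sum_(i < m) B j i * C i k.
  under eq_bigr do rewrite mulr_sumr.
  rewrite exchange_big; apply: eq_bigr => j _; rewrite mulr_sumr.
  by apply: eq_bigr => i _; ring.
by apply: ler_sum => j _; rewrite mulrC ler_wpM2r ?simplex_ge0 ?BC_le.
Qed.

Lemma phiC_ge0 C p x : 0 <= phiC C p x.
Proof. by apply: prodr_ge0 => k _; exact: powR_ge0. Qed.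

Lemma phiC_Vop_le A B C p x :
  (forall i j, 0 <= A i j <= 1) -> (forall i j, 0 <= B i j <= 1) ->
  A *m B^T = const_mx 1 -> (forall i j, 0 <= C i j) ->
  (forall k, col_sub A C k \/ col_sub B C k) -> (forall k, 0 < p k) ->
  x \in @simplex R m -> phiC C p (Vop A B x) <= phiC C p x.
Proof.
move=> A01 B01 AB1 C_ge0 AC_or_BC p_gt0 x_simplex.
have A_ge0 i j : 0 <= A i j by case/andP: (A01 i j).
have B_ge0 i j : 0 <= B i j by case/andP: (B01 i j).
have Vx_simplex : Vop A B x \in @simplex R m by exact: Vop_simplex.
apply: ler_prod => k _; rewrite powR_ge0 /=.
apply: ge0_ler_powR; rewrite ?nnegrE ?lin_form_ge0 ?(ltW (p_gt0 k)) //.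
case: (AC_or_BC k) => [AC_le|BC_le]; last exact: lin_form_Vop_le.
by rewrite Vop_sym; exact: lin_form_Vop_le.
Qed.

Lemma phiC_continuous C p : (forall i j, 0 <= C i j) -> (forall k, 0 < p k) ->
  {within @simplex R m, continuous phiC C p}.
Proof.
move=> C_ge0 p_gt0.
pose psi x := \prod_(k < m) Num.max (\sum_(i < m) C i k * x 0 i) 0 `^ p k.
apply: (@subspace_eq_continuous _ _ _ psi).
  by move=> x x_simplex; apply: eq_bigr => k _; rewrite max_l ?lin_form_ge0.
apply: continuous_subspaceT; apply: continuous_prod => k x.
apply: (@continuous_comp _ _ _ (fun x : 'rV[R]_m => \sum_(i < m) C i k * x 0 i)
  (fun y => Num.max y 0 `^ p k)); last exact: continuous_powR_max0.
move: x; apply: continuous_sum => i x.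
apply: continuousM; [exact: cst_continuous | exact: coord_continuous].
Qed.

End QuadraticOperator.

Theorem corollary3p2 (R : realType) (m : nat) (hm : (2 <= m)%N)
  (A B C : 'M[R]_m) (p : 'I_m -> R)
  (hA : forall i j, 0 <= A i j <= 1)
  (hB : forall i j, 0 <= B i j <= 1)
  (hdetA : \det A = 0) (hdetB : \det B = 0)
  (hAB : A *m B^T = const_mx 1)
  (hAr : ~ rows_identical A) (hBr : ~ rows_identical B)
  (hC : forall i j, 0 <= C i j)
  (hCk : forall k, col_sub A C k \/ col_sub B C k)
  (hp : forall k, 0 < p k) :
  is_lyapunov (Vop A B) (phiC C p).
Proof.
split; first exact: phiC_continuous.
move=> x0 x0_simplex.
have orbit_simplex n : iter n (Vop A B) x0 \in @simplex R m.
  elim: n => [|n IHn] //=; apply: Vop_simplex => // i j.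
  - by case/andP: (hA i j).
  - by case/andP: (hB i j).
apply: nonincreasing_is_cvgn.
  by apply/nonincreasing_seqP => n; rewrite iterS; exact: phiC_Vop_le.
by exists 0 => _ [n _ <-]; exact: phiC_ge0.
Qed.
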